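(* Let $\beta\in\mathbb{R}^3$ with $\|\beta\|\le 1$ and $\rho=\frac12(I_2+\sum_{i=1}^3\beta_i\sigma_i)$. Then: (i) A matrix $P=\frac14\big(I_4+\sum_i\beta_i\sigma_i\otimes I_2+\sum_i\gamma_i I_2\otimes\sigma_i+\sum_{l,k}\delta_{lk}\sigma_l\otimes\sigma_k\big)$ (with this given $\beta$, and $\gamma\in\mathbb{R}^3$, $\delta\in M_3(\mathbb{R})$) is a purification of $\rho$ if and only if $\gamma=\delta^T\beta$ and $\delta$ solves the system $$\delta\delta^T=(1-\|\beta\|^2)I_3+\beta\beta^T,\qquad \det\delta=\|\beta\|^2-1,$$ and every purification of $\rho$ is of this form. (ii) This system always has a solution, and if $\tilde\delta$ is any one solution, then the set of all solutions is exactly $\{\tilde\delta S: S\in SO(3,\mathbb{R})\}$. (iii) Consequently, when $\|\beta\|<1$ the set of purifications of $\rho$ is in bijection with $SO(3,\mathbb{R})$ (via $S\mapsto$ the purification with $\delta=\tilde\delta S$), and when $\|\beta\|=1$ it is in bijection with the unit sphere $S^2\subset\mathbb{R}^3$.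
   Context: $\sigma_1,\sigma_2,\sigma_3$ are the Pauli matrices. A pure state on $\mathbb{C}^2\otimes\mathbb{C}^2$ is a positive semidefinite trace-one matrix that is a projection. A purification of a $2\times2$ density matrix $\rho$ is a pure state $P$ on $\mathbb{C}^2\otimes\mathbb{C}^2$ whose partial trace over the second tensor factor equals $\rho$. For $P=\frac14\big(I_4+\sum_i\beta_i\sigma_i\otimes I_2+\sum_i\gamma_i I_2\otimes\sigma_i+\sum_{l,k}\delta_{lk}\sigma_l\otimes\sigma_k\big)$ the partial trace over the second factor is $\frac12(I_2+\sum_i\beta_i\sigma_i)$ and over the first factor is $\frac12(I_2+\sum_i\gamma_i\sigma_i)$. *)

From HB Require Import structures.
From mathcomp Require Import all_boot all_order all_algebra.
From mathcomp Require Import complex mxtens.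
Set Implicit Arguments. Unset Strict Implicit. Unset Printing Implicit Defensive.
Import Order.TTheory GRing.Theory Num.Theory.
Local Open Scope ring_scope.

Section Defs.
Variable R : rcfType.
Local Notation C := R[i].

(* Pauli matrices sigma_1, sigma_2, sigma_3 (indexed by 'I_3 = {0,1,2}) *)
Definition sigma1 : 'M[C]_2 := \matrix_(i, j) (if (i : nat) == j then 0 else 1).
Definition sigma2 : 'M[C]_2 :=
  \matrix_(i, j) (if (i : nat) == j then 0
                  else if (i : nat) == 0%N then - Complex 0 1 else Complex 0 1).
Definition sigma3 : 'M[C]_2 :=
  \matrix_(i, j) (if (i : nat) == j then (if (i : nat) == 0%N then 1 else -1) else 0).
Definition pauli (k : 'I_3) : 'M[C]_2 :=
  if (k : nat) == 0%N then sigma1 else if (k : nat) == 1%N then sigma2 else sigma3.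

Definition adjmx m n (A : 'M[C]_(m, n)) : 'M[C]_(n, m) := (map_mx (@conjc R) A)^T.

Definition psd n (A : 'M[C]_n) : Prop :=
  A = adjmx A /\ forall v : 'cV[C]_n, 0 <= (adjmx v *m A *m v) 0 0.

Definition pure_state (P : 'M[C]_(2 * 2)) : Prop :=
  psd P /\ \tr P = 1 /\ P *m P = P.

(* partial trace over the second tensor factor (Kronecker index (i,k) ~ 2i+k) *)
Definition ptrace2 (P : 'M[C]_(2 * 2)) : 'M[C]_2 :=
  \matrix_(i, j) \sum_(k < 2) P (mxtens_index (i, k)) (mxtens_index (j, k)).

Definition purification (rho : 'M[C]_2) (P : 'M[C]_(2 * 2)) : Prop :=
  pure_state P /\ ptrace2 P = rho.

Definition vnorm (b : 'cV[R]_3) : R := Num.sqrt (\sum_(i < 3) b i 0 ^+ 2).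

Definition rho_of (b : 'cV[R]_3) : 'M[C]_2 :=
  2^-1 *: (1%:M + \sum_(i < 3) (b i 0)%:C%C *: pauli i).

Definition Pform (b g : 'cV[R]_3) (d : 'M[R]_3) : 'M[C]_(2 * 2) :=
  4^-1 *: (1%:M
    + \sum_(i < 3) (b i 0)%:C%C *: (pauli i *t (1%:M : 'M[C]_2))
    + \sum_(i < 3) (g i 0)%:C%C *: ((1%:M : 'M[C]_2) *t pauli i)
    + \sum_(l < 3) \sum_(k < 3) (d l k)%:C%C *: (pauli l *t pauli k)).

Definition delta_system (b : 'cV[R]_3) (d : 'M[R]_3) : Prop :=
  d *m d^T = (1 - vnorm b ^+ 2) *: 1%:M + b *m b^T /\ \det d = vnorm b ^+ 2 - 1.

Definition is_SO3 (S : 'M[R]_3) : Prop := S^T *m S = 1%:M /\ \det S = 1.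

End Defs.

Definition set_bij (T U : Type) (A : T -> Prop) (B : U -> Prop) (f : T -> U) : Prop :=
  (forall x, A x -> B (f x)) /\
  (forall x y, A x -> A y -> f x = f y -> x = y) /\
  (forall y, B y -> exists x, A x /\ f x = y).

(* In the Pauli basis the square of a 4x4 expansion is again an expansion, whose
   coefficients follow from the multiplication rules of the Pauli matrices; comparing
   coefficients turns [P * P = P] for [P = Pform b g d] into the system
   |b|^2 + |g|^2 + |d|^2 = 3, d g = b, d^T b = g, d + cof d = b g^T.
   Since [cof d * d^T = det d * I], this system is equivalent to [g = d^T b] together with
   [d d^T = (1 - |b|^2) I + b b^T] and [det d = |b|^2 - 1].  When |b| < 1 every solution is
   invertible and [d0^-1 d] is a rotation; when |b| = 1 the solutions are the rank-one
   matrices [b v^T] with |v| = 1, and any unit vector is carried to any other by a product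
   of two Householder reflections.  Conversely, a purification is Hermitian, hence the
   expansion of its own real Pauli coordinates, and its trace and partial trace fix the
   coordinates along [I] and [sigma_i (x) I]. *)

From HB Require Import structures.
From mathcomp Require Import all_boot all_order all_algebra.
From mathcomp Require Import complex mxtens.
From mathcomp Require Import ring lra.
Set Implicit Arguments.
Unset Strict Implicit.
Unset Printing Implicit Defensive.
Import Order.TTheory GRing.Theory Num.Theory.
Local Open Scope ring_scope.

Definition j0 : 'I_3 := @Ordinal 3 0 isT.
Definition j1 : 'I_3 := @Ordinal 3 1 isT.
Definition j2 : 'I_3 := @Ordinal 3 2 isT.

Lemma ord3P (i : 'I_3) : [\/ i = j0, i = j1 | i = j2].
Proof.
by case: i => [[|[|[|//]]] ?]; [constructor 1|constructor 2|constructor 3]; apply: val_inj.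
Qed.

Lemma sum3 (V : nmodType) (F : 'I_3 -> V) : \sum_(i < 3) F i = F j0 + F j1 + F j2.
Proof.
by rewrite !big_ord_recr big_ord0 /= add0r; congr (F _ + F _ + F _); apply: val_inj.
Qed.

Lemma sum1 (V : nmodType) (F : 'I_1 -> V) : \sum_(i < 1) F i = F 0.
Proof. by rewrite big_ord1. Qed.

Section Mx3.
Variable R : comNzRingType.
Implicit Types (u v : 'cV[R]_3) (A : 'M[R]_3).

(* Expanding determinants produces indices such as [lift j0 ord0]; rewriting entries through
   their [nat] values and back normalizes them to [j0], [j1], [j2]. *)
Definition mx_nat {m n} (A : 'M[R]_(m.+1, n.+1)) (x y : nat) := A (inord x) (inord y).

Lemma mx_natE {m n} (A : 'M[R]_(m.+1, n.+1)) i j : A i j = mx_nat A i j.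
Proof. by rewrite /mx_nat !inord_val. Qed.

Lemma inord3E :
  ((inord 0 = j0) * (inord 1 = j1) * (inord 2 = j2) * (inord 0 = 0 :> 'I_1))%type.
Proof. by do !split; apply: val_inj; rewrite /= inordK. Qed.

Lemma det3 A : \det A =
  A j0 j0 * (A j1 j1 * A j2 j2 - A j1 j2 * A j2 j1)
  - A j0 j1 * (A j1 j0 * A j2 j2 - A j1 j2 * A j2 j0)
  + A j0 j2 * (A j1 j0 * A j2 j1 - A j1 j1 * A j2 j0).
Proof.
rewrite (expand_det_row _ j0) sum3 /cofactor.
rewrite !(expand_det_row _ ord0) !big_ord_recr !big_ord0 /= /cofactor !det_mx11 !mxE.
rewrite !(mx_natE A) /= /mx_nat !inord3E /=; ring.
Qed.

Lemma det_scalar_add_rank1 a u v :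
  \det (a%:M + u *m v^T) = a ^+ 2 * (a + (v^T *m u) 0 0).
Proof.
rewrite det3 !mxE !sum3 !big_ord1 !mxE /=; ring.
Qed.

Definition succ3 (i : 'I_3) : 'I_3 := if i == j0 then j1 else if i == j1 then j2 else j0.

Lemma succ3E : ((succ3 j0 = j1) * (succ3 j1 = j2) * (succ3 j2 = j0))%type.
Proof. by []. Qed.

Lemma cofactor3E A i j : cofactor A i j =
  A (succ3 i) (succ3 j) * A (succ3 (succ3 i)) (succ3 (succ3 j))
  - A (succ3 i) (succ3 (succ3 j)) * A (succ3 (succ3 i)) (succ3 j).
Proof.
rewrite /cofactor (expand_det_row _ ord0).
rewrite !big_ord_recr big_ord0 /= /cofactor !det_mx11 !mxE.
by case: (ord3P i) => ->; case: (ord3P j) => ->;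
  rewrite !(mx_natE A) /= /mx_nat !inord3E; ring.
Qed.

Lemma adj_rank1 u v : \adj (u *m v^T) = 0.
Proof.
apply: trmx_inj; rewrite trmx0; apply/matrixP => i j; rewrite !mxE cofactor3E !mxE !big_ord1 !mxE.
ring.
Qed.

End Mx3.

Lemma mulmx_trmx_eq0 (R : realDomainType) m n (M : 'M[R]_(m, n)) :
  M *m M^T = 0 -> M = 0.
Proof.
move=> /(congr1 mxtrace); rewrite mxtrace0 /mxtrace => /eqP.
rewrite psumr_eq0 => [/allP zero_rows|i _]; last first.
  by rewrite mxE sumr_ge0 // => j _; rewrite mxE -expr2 sqr_ge0.
apply/matrixP => i j; move/eqP: (zero_rows i (mem_index_enum i)).
rewrite mxE; under eq_bigr => k _ do rewrite mxE.
move/eqP; rewrite psumr_eq0 => [/allP/(_ j (mem_index_enum j))|k _]; last by rewrite -expr2 sqr_ge0.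
by rewrite mulf_eq0 orbb mxE => /eqP.
Qed.

Lemma scale_half_addr_eq (F : numFieldType) (V : lmodType F) (x y : V) :
  2^-1 *: (x + y) = x <-> y = x.
Proof.
have nz2 : (2 : F) != 0 by rewrite pnatr_eq0.
have xx : x + x = 2 *: x by rewrite scaler_nat mulr2n.
split=> [h | ->]; last by rewrite xx scalerA mulVf ?scale1r.
by apply: (@addrI _ x); rewrite xx -[in RHS]h scalerA mulfV ?scale1r.
Qed.

Section Householder.
Variables (R : fieldType) (n : nat).
Implicit Types (w x : 'cV[R]_n).

Definition householder w : 'M[R]_n := 1%:M - (2 / (w^T *m w) 0 0) *: (w *m w^T).

Lemma householder_mulmx w x :
  householder w *m x = x - (2 / (w^T *m w) 0 0 * (w^T *m x) 0 0) *: w.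
Proof.
rewrite mulmxBl mul1mx -scalemxAl -mulmxA [w^T *m x in LHS]mx11_scalar.
by rewrite mul_mx_scalar scalerA.
Qed.

Lemma householder_mulmx_self w : (w^T *m w) 0 0 != 0 -> householder w *m w = - w.
Proof.
move=> nz_w; rewrite householder_mulmx divfK // scaler_nat mulr2n.
by rewrite opprD addrA subrr add0r.
Qed.

Lemma householder_mulmx_orth w x : (w^T *m x) 0 0 = 0 -> householder w *m x = x.
Proof. by move=> orth; rewrite householder_mulmx orth mulr0 scale0r subr0. Qed.

Lemma householder_sym w : (householder w)^T = householder w.
Proof. by rewrite /householder linearB linearZ /= trmx1 trmx_mul trmxK. Qed.

Lemma householder_orth w : (w^T *m w) 0 0 != 0 -> (householder w)^T *m householder w = 1%:M.
Proof.
move=> nz_w; rewrite householder_sym {2}/householder mulmxBr mulmx1 -scalemxAr.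
by rewrite mulmxA householder_mulmx_self // mulNmx scalerN opprK subrK.
Qed.
End Householder.

Lemma householder_det (R : fieldType) (w : 'cV[R]_3) :
  (w^T *m w) 0 0 != 0 -> \det (householder w) = -1.
Proof.
move=> nz_w; rewrite /householder -scaleNr scalemxAl det_scalar_add_rank1.
by rewrite -scalemxAr mxE mulNr divfK // expr1n mul1r; ring.
Qed.

Section Rotations.
Variable R : rcfType.
Implicit Types (u v w : 'cV[R]_3).

Lemma vnorm_sqr u : vnorm u ^+ 2 = (u^T *m u) 0 0.
Proof.
rewrite /vnorm sqr_sqrtr ?sumr_ge0 // => [|i _]; last exact: sqr_ge0.
by rewrite mxE; apply: eq_bigr => i _; rewrite mxE expr2.
Qed.

Lemma vnormE u : vnorm u = Num.sqrt ((u^T *m u) 0 0).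
Proof. by rewrite /vnorm mxE; congr Num.sqrt; apply: eq_bigr => i _; rewrite mxE expr2. Qed.

Lemma trmx_mul_vnorm u : u^T *m u = (vnorm u ^+ 2)%:M.
Proof. by rewrite vnorm_sqr -mx11_scalar. Qed.

Lemma vnorm_sqr_eq1 u : (vnorm u ^+ 2 == 1) = (vnorm u == 1).
Proof. by rewrite sqrp_eq1 // sqrtr_ge0. Qed.

Lemma vnorm_eq1 u : vnorm u = 1 <-> (u^T *m u) 0 0 = 1.
Proof.
rewrite -vnorm_sqr; split=> [-> | /eqP]; first exact: expr1n.
by rewrite sqrp_eq1 ?sqrtr_ge0 // => /eqP.
Qed.

Lemma dotmx_self_eq0 u : (u^T *m u) 0 0 = 0 -> u = 0.
Proof.
move=> u0; apply: trmx_inj; rewrite trmx0; apply: mulmx_trmx_eq0.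
by rewrite trmxK [u^T *m u]mx11_scalar u0 raddf0.
Qed.

Lemma dotmxC u v : (u^T *m v) 0 0 = (v^T *m u) 0 0.
Proof. by rewrite -[u^T *m v]trmxK trmx_mul trmxK mxE. Qed.

Lemma householder_mul_SO3 v w :
  (v^T *m v) 0 0 != 0 -> (w^T *m w) 0 0 != 0 -> is_SO3 (householder v *m householder w).
Proof.
move=> nz_v nz_w; split; last by rewrite det_mulmx !householder_det // mulrNN mulr1.
rewrite trmx_mul mulmxA -(mulmxA _ (householder v)^T) householder_orth // mulmx1.
exact: householder_orth.
Qed.

Lemma rotation_exists u v :
  vnorm u = 1 -> vnorm v = 1 -> exists S, is_SO3 S /\ S^T *m u = v.
Proof.
move=> /vnorm_eq1 uu /vnorm_eq1 vv.
have nz_u : (u^T *m u) 0 0 != 0 by rewrite uu oner_eq0.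
have [uv0 | uv_nz] := eqVneq (u + v) 0.
  (* When [v = - u], follow a reflection fixing [u] by the reflection along [u]. *)
  have -> : v = - u by apply/eqP; rewrite -addr_eq0 addrC uv0.
  pose w : 'cV[R]_3 := if u j0 0 == 0 then delta_mx j0 0
                       else \col_i [:: u j1 0; - u j0 0; 0]`_i.
  have w_orth : (w^T *m u) 0 0 = 0.
    rewrite /w; case: ifP => [/eqP u0 | _]; rewrite mxE sum3 !mxE /= ?u0; ring.
  have nz_w : (w^T *m w) 0 0 != 0.
    apply/eqP => /dotmx_self_eq0/matrixP; rewrite /w; case: ifP => [_ /(_ j0 0) | /negbT nz0 /(_ j1 0)].
      by rewrite !mxE /= => /eqP; rewrite oner_eq0.
    by rewrite !mxE /= => /eqP; rewrite oppr_eq0 (negbTE nz0).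
  exists (householder w *m householder u); split; first exact: householder_mul_SO3.
  by rewrite trmx_mul !householder_sym -mulmxA (householder_mulmx_orth w_orth) householder_mulmx_self.
set w := u + v.
have trw : w^T = u^T + v^T by apply/matrixP => i j; rewrite !mxE.
have wu : (w^T *m u) 0 0 = 1 + (v^T *m u) 0 0 by rewrite trw mulmxDl mxE uu.
have ww : (w^T *m w) 0 0 = 2 * (1 + (v^T *m u) 0 0).
  have addE (A B : 'M[R]_1) : (A + B) 0 0 = A 0 0 + B 0 0 by rewrite mxE.
  by rewrite trw /w mulmxDl !mulmxDr !addE uu vv dotmxC; ring.
have nz_w : (w^T *m w) 0 0 != 0 by apply: contra uv_nz => /eqP/dotmx_self_eq0/eqP.
have Hwu : householder w *m u = - v.
  have nz_uv : 1 + (v^T *m u) 0 0 != 0 by move: nz_w; rewrite ww mulf_eq0 => /norP[].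
  rewrite householder_mulmx wu ww (_ : 2 / _ * _ = 1); last by field.
  by rewrite scale1r opprD addrA subrr add0r.
have nz_v : (v^T *m v) 0 0 != 0 by rewrite vv oner_eq0.
exists (householder w *m householder v); split; first exact: householder_mul_SO3.
by rewrite trmx_mul !householder_sym -mulmxA Hwu mulmxN householder_mulmx_self ?opprK.
Qed.

End Rotations.

Definition pure_eqs (R : rcfType) (b g : 'cV[R]_3) (d : 'M[R]_3) : Prop :=
  [/\ vnorm b ^+ 2 + vnorm g ^+ 2 + \tr (d *m d^T) = 3, d *m g = b, d^T *m b = g
    & d + (\adj d)^T = b *m g^T].

Section DeltaSystem.
Variables (R : rcfType) (b : 'cV[R]_3).
Implicit Types (d S : 'M[R]_3).

Lemma delta_system_mulmx_SO3 d S :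
  delta_system b d -> is_SO3 S -> delta_system b (d *m S).
Proof.
case=> dd detd [orthS detS]; split; last by rewrite det_mulmx detS mulr1.
by rewrite trmx_mul mulmxA -(mulmxA d) (mulmx1C orthS) mulmx1.
Qed.

Lemma delta_system_fix d : delta_system b d -> d *m (d^T *m b) = b.
Proof.
case=> dd _; rewrite mulmxA dd mulmxDl -mulmxA trmx_mul_vnorm mul_mx_scalar.
by rewrite -scalemxAl mul1mx -scalerDl subrK scale1r.
Qed.

Lemma delta_system_det_neq0 d : vnorm b != 1 -> delta_system b d -> \det d != 0.
Proof. by move=> b_ne1 [_ ->]; rewrite subr_eq0 vnorm_sqr_eq1. Qed.

Lemma delta_system_rank1 v : vnorm b = 1 -> vnorm v = 1 -> delta_system b (b *m v^T).
Proof.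
move=> b1 v1; split.
  rewrite trmx_mul trmxK mulmxA -(mulmxA b) trmx_mul_vnorm v1 b1 expr1n mulmx1.
  by rewrite subrr scale0r add0r.
by rewrite -[b *m _]add0r -(raddf0 (@scalar_mx R 3)) det_scalar_add_rank1 b1 expr1n subrr expr0n mul0r.
Qed.

Lemma delta_system_vnorm d : delta_system b d -> vnorm (d^T *m b) = vnorm b.
Proof. by move=> sys; rewrite !vnormE trmx_mul trmxK -mulmxA delta_system_fix. Qed.

Lemma delta_system_unit_norm d : vnorm b = 1 -> delta_system b d ->
  d = b *m (d^T *m b)^T /\ vnorm (d^T *m b) = 1.
Proof.
move=> b1 sys; split; last by rewrite delta_system_vnorm.
have dd : d *m d^T = b *m b^T by case: sys => ->; rewrite b1 expr1n subrr scale0r add0r.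
set g := d^T *m b; have dg : d *m g = b := delta_system_fix sys.
have gg : g^T *m g = 1%:M by rewrite trmx_mul_vnorm delta_system_vnorm // b1 expr1n.
clearbody g; apply/eqP; rewrite -subr_eq0; apply/eqP/mulmx_trmx_eq0.
rewrite linearB /= trmx_mul trmxK mulmxBl !mulmxBr !mulmxA dg.
by rewrite -(mulmxA b g^T d^T) -trmx_mul dg -(mulmxA b g^T g) gg mulmx1 dd !subrr.
Qed.

Lemma delta_system_orbit d0 d : vnorm b <= 1 -> delta_system b d0 -> delta_system b d ->
  exists S, is_SO3 S /\ d = d0 *m S.
Proof.
rewrite le_eqVlt => /orP[/eqP b1 | b_lt1] sys0 sys.
  have [d0E g0_1] := delta_system_unit_norm b1 sys0.
  have [dE g_1] := delta_system_unit_norm b1 sys.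
  have [S [SO3S Sg]] := rotation_exists g0_1 g_1.
  by exists S; split; rewrite // d0E -mulmxA -[_ *m S]trmxK trmx_mul trmxK Sg.
have d0_unit : d0 \in unitmx by rewrite unitmxE unitfE delta_system_det_neq0 ?lt_eqF.
exists (invmx d0 *m d); split; last by rewrite mulKVmx.
split; last first.
  by case: sys0 sys => _ det0 [_ det]; rewrite det_mulmx det_inv det -det0 mulVf // -unitfE -unitmxE.
apply: mulmx1C; case: sys0 sys => dd0 _ [dd _].
rewrite trmx_mul !mulmxA -(mulmxA _ d) dd -dd0 mulmxA mulVmx // mul1mx.
by rewrite -trmx_mul mulVmx // trmx1.
Qed.

Lemma delta_system_exists : vnorm b <= 1 -> exists d, delta_system b d.
Proof.
(* [d] is minus the positive square root of [(1 - |b|^2) I + b b^T]. *)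
move=> b_le1; set n := vnorm b ^+ 2.
have n_le1 : n <= 1 by rewrite /n expr_le1 // sqrtr_ge0.
set s := Num.sqrt (1 - n); have s_ge0 : 0 <= s := sqrtr_ge0 _.
have s2 : s ^+ 2 = 1 - n by rewrite sqr_sqrtr // subr_ge0.
set t := (1 + s)^-1.
have s1_nz : 1 + s != 0 by rewrite lt0r_neq0 // ltr_pwDl.
have nE : n = 1 - s ^+ 2 by rewrite s2 subKr.
have tn : s + t * n = 1 by rewrite nE /t; field.
have tt : 2 * s * t + t ^+ 2 * n = 1 by rewrite nE /t; field.
pose B := b *m b^T.
have BB : B *m B = n *: B.
  by rewrite /B mulmxA -(mulmxA b) trmx_mul_vnorm mul_mx_scalar scalemxAl.
pose M := s%:M + t *: B.
have MT : M^T = M by rewrite /M /B linearD linearZ /= tr_scalar_mx trmx_mul trmxK.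
exists (- M); split.
  rewrite linearN /= MT mulNmx mulmxN opprK /M mulmxDl !mulmxDr -/n -/B.
  rewrite -scalar_mxM mul_scalar_mx mul_mx_scalar -scalemxAl -scalemxAr BB !scalerA.
  rewrite -addrA -!scalerDl scalemx1 -expr2 s2 -[X in _ = _ + X]scale1r -tt.
  by congr (_ + _ *: _); ring.
rewrite -scaleN1r detZ /M scalemxAl det_scalar_add_rank1 -scalemxAr mxE -vnorm_sqr -/n.
by rewrite tn s2; ring.
Qed.

Lemma tr_mul_trmx_vnorm : \tr (b *m b^T) = vnorm b ^+ 2.
Proof. by rewrite mxtrace_mulC trmx_mul_vnorm mxtrace_scalar. Qed.

Lemma pure_eqs_delta_system g d :
  pure_eqs b g d -> g = d^T *m b /\ delta_system b d.
Proof.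
case=> norms dg gE cof; split=> //.
have gb : vnorm g = vnorm b by rewrite !vnormE -{1}gE trmx_mul trmxK -mulmxA dg.
have dd : d *m d^T = b *m b^T - (\det d)%:M.
  rewrite -{1}(addrK (\adj d)^T d) cof mulmxBl -mulmxA -trmx_mul dg.
  by rewrite -trmx_mul mul_mx_adj tr_scalar_mx.
have detE : \det d = vnorm b ^+ 2 - 1.
  move: norms; rewrite gb dd linearB /= tr_mul_trmx_vnorm mxtrace_scalar.
  by rewrite -[_ *+ 3]mulr_natl; lra.
split=> //; rewrite dd detE scalemx1 addrC -raddfN opprB; reflexivity.
Qed.

Lemma delta_system_pure_eqs d : delta_system b d -> pure_eqs b (d^T *m b) d.
Proof.
move=> sys; split; rewrite ?delta_system_fix //.
- case: (sys) => dd _; rewrite delta_system_vnorm // dd linearD /= tr_mul_trmx_vnorm.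
  by rewrite scalemx1 mxtrace_scalar -[_ *+ 3]mulr_natl; lra.
have [b1 | b_ne1] := eqVneq (vnorm b) 1.
  have [dE _] := delta_system_unit_norm b1 sys.
  by rewrite -dE {2}dE adj_rank1 linear0 addr0.
have dT_unit : d^T \in unitmx by rewrite unitmx_tr unitmxE unitfE delta_system_det_neq0.
case: (sys) => dd detd; apply: (can_inj (mulmxK dT_unit)).
rewrite mulmxDl -trmx_mul mul_mx_adj tr_scalar_mx -mulmxA -trmx_mul delta_system_fix //.
rewrite dd detd scalemx1 addrAC -raddfD /= (_ : 1 - _ + _ = 0) ?raddf0 ?add0r //.
by rewrite addrC subrKA subrr.
Qed.

End DeltaSystem.

Local Open Scope complex_scope.

Lemma ord2P (i : 'I_2) : i = ord0 \/ i = ord_max.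
Proof. by case: i => [[|[|//]] ?]; [left|right]; apply: val_inj. Qed.

Lemma sum2 (V : nmodType) (F : 'I_2 -> V) : \sum_(i < 2) F i = F ord0 + F ord_max.
Proof. by rewrite big_ord_recr big_ord1; congr (F _ + _); apply: val_inj. Qed.

Notation mt a k := (@mxtens_index 2 2 (a, k)).

Lemma sum4 (V : nmodType) (F : 'I_(2 * 2) -> V) :
  \sum_(r < 2 * 2) F r = \sum_(a < 2) \sum_(k < 2) F (mt a k).
Proof.
rewrite pair_big /=; apply: reindex => /=.
exists (@mxtens_unindex 2 2) => [[a k] _ | r _]; first by rewrite mxtens_indexK.
by rewrite -surjective_pairing mxtens_unindexK.
Qed.

Section Pauli.
Variable R : rcfType.
Local Notation C := R[i].
Local Notation Re := (@complex.Re R).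
Local Notation Im := (@complex.Im R).

Lemma pauliE (l : 'I_3) (a a' : 'I_2) : pauli R l a a' =
  if (l : nat) == 0 then (if (a : nat) == a' then 0 else 1)
  else if (l : nat) == 1 then (if (a : nat) == a' then 0 else if (a : nat) == 0 then - Complex 0 1 else Complex 0 1)
  else (if (a : nat) == a' then (if (a : nat) == 0 then 1 else -1) else 0).
Proof. by rewrite /pauli; case: ifP => _; [|case: ifP => _]; rewrite mxE. Qed.

Lemma invn_complex (n : nat) : (n%:R^-1 : C) = (n%:R^-1 : R)%:C.
Proof. by rewrite -(rmorph_nat (real_complex R)) -fmorphV. Qed.

Lemma complex_eq_ReIm (x y : C) : x = y <-> Re x = Re y /\ Im x = Im y.
Proof. by split=> [-> // | []]; case: x; case: y => ? ? ? ? /= -> ->. Qed.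

Definition pauli_expansion (s : R) (u v : 'cV[R]_3) (M : 'M[R]_3) : 'M[C]_(2 * 2) :=
  s%:C *: 1%:M
  + \sum_(i < 3) (u i 0)%:C *: (pauli R i *t 1%:M)
  + \sum_(i < 3) (v i 0)%:C *: (1%:M *t pauli R i)
  + \sum_(l < 3) \sum_(k < 3) (M l k)%:C *: (pauli R l *t pauli R k).

(* The entry in row [mt a k] = [2 a + k] and column [mt a' k'], read off the Pauli
   matrices; indices beyond [1] are junk. *)
Definition expansion_entry (s : R) (u v : 'cV[R]_3) (M : 'M[R]_3) (a k a' k' : nat) : C :=
  match a, k, a', k' with
  | 0, 0, 0, 0 => Complex (s + u j2 0 + v j2 0 + M j2 j2) 0
  | 0, 0, 0, 1 => Complex (v j0 0 + M j2 j0) (- v j1 0 - M j2 j1)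
  | 0, 0, 1, 0 => Complex (u j0 0 + M j0 j2) (- u j1 0 - M j1 j2)
  | 0, 0, 1, 1 => Complex (M j0 j0 - M j1 j1) (- M j0 j1 - M j1 j0)
  | 0, 1, 0, 0 => Complex (v j0 0 + M j2 j0) (v j1 0 + M j2 j1)
  | 0, 1, 0, 1 => Complex (s + u j2 0 - v j2 0 - M j2 j2) 0
  | 0, 1, 1, 0 => Complex (M j0 j0 + M j1 j1) (M j0 j1 - M j1 j0)
  | 0, 1, 1, 1 => Complex (u j0 0 - M j0 j2) (- u j1 0 + M j1 j2)
  | 1, 0, 0, 0 => Complex (u j0 0 + M j0 j2) (u j1 0 + M j1 j2)
  | 1, 0, 0, 1 => Complex (M j0 j0 + M j1 j1) (- M j0 j1 + M j1 j0)
  | 1, 0, 1, 0 => Complex (s - u j2 0 + v j2 0 - M j2 j2) 0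
  | 1, 0, 1, 1 => Complex (v j0 0 - M j2 j0) (- v j1 0 + M j2 j1)
  | 1, 1, 0, 0 => Complex (M j0 j0 - M j1 j1) (M j0 j1 + M j1 j0)
  | 1, 1, 0, 1 => Complex (u j0 0 - M j0 j2) (u j1 0 - M j1 j2)
  | 1, 1, 1, 0 => Complex (v j0 0 - M j2 j0) (v j1 0 - M j2 j1)
  | 1, 1, 1, 1 => Complex (s - u j2 0 - v j2 0 + M j2 j2) 0
  | _, _, _, _ => 0
  end.

Lemma pauli_expansionE s u v M (a k a' k' : 'I_2) :
  pauli_expansion s u v M (mt a k) (mt a' k') = expansion_entry s u v M a k a' k'.
Proof.
have -> : pauli_expansion s u v M (mt a k) (mt a' k') =
    s%:C * ((a == a') && (k == k'))%:R
    + \sum_(i < 3) (u i 0)%:C * (pauli R i a a' * (k == k')%:R)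
    + \sum_(i < 3) (v i 0)%:C * ((a == a')%:R * pauli R i k k')
    + \sum_(l < 3) \sum_(m < 3) (M l m)%:C * (pauli R l a a' * pauli R m k k').
  rewrite !mxE !summxE (inj_eq (can_inj (@mxtens_indexK 2 2))) xpair_eqE.
  congr (_ + _ + _ + _); apply: eq_bigr => l _; rewrite ?summxE.
  - by rewrite mxE tensmxE mxE.
  - by rewrite mxE tensmxE mxE.
  - by apply: eq_bigr => m _; rewrite mxE tensmxE.
rewrite !sum3 !pauliE.
by case: (ord2P a) => ->; case: (ord2P k) => ->; case: (ord2P a') => ->; case: (ord2P k') => ->;
  apply complex_eq_ReIm; rewrite /=; split; ring.
Qed.

Lemma pauli_expansion_sqr (b g : 'cV[R]_3) (d : 'M[R]_3) :
  let E := pauli_expansion 1 b g d in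
  E *m E = pauli_expansion (1 + vnorm b ^+ 2 + vnorm g ^+ 2 + \tr (d *m d^T))
             (2 *: (b + d *m g)) (2 *: (g + d^T *m b)) (2 *: (d + b *m g^T - (\adj d)^T)).
Proof.
apply/matrixP => r c; case: (mxtens_indexP r) => a k; case: (mxtens_indexP c) => a' k'.
rewrite mxE sum4 !sum2 !pauli_expansionE !vnorm_sqr.
case: (ord2P a) => ->; case: (ord2P k) => ->; case: (ord2P a') => ->; case: (ord2P k') => ->;
  apply complex_eq_ReIm; rewrite /= /mxtrace !mxE !cofactor3E !succ3E ?sum1 ?sum3 ?mxE ?sum3 ?mxE; split; ring.
Qed.

Implicit Types (P : 'M[C]_(2 * 2)) (X Y : 'M[C]_2).

Definition pauli_coord P X Y : R := Re (\tr (P *m (X *t Y))).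

Lemma pauli_coordE P X Y : pauli_coord P X Y =
  Re (\sum_(a < 2) \sum_(k < 2) \sum_(a' < 2) \sum_(k' < 2) P (mt a k) (mt a' k') * (X a' a * Y k' k)).
Proof.
rewrite /pauli_coord /mxtrace sum4; congr Re; apply: eq_bigr => a _; apply: eq_bigr => k _.
by rewrite mxE sum4; apply: eq_bigr => a' _; apply: eq_bigr => k' _; rewrite tensmxE.
Qed.

Lemma pauli_coord_expansion s u v M :
  let E := pauli_expansion s u v M in
  [/\ pauli_coord E 1%:M 1%:M = 4 * s,
     forall i, pauli_coord E (pauli R i) 1%:M = 4 * u i 0,
     forall i, pauli_coord E 1%:M (pauli R i) = 4 * v i 0
   & forall l k, pauli_coord E (pauli R l) (pauli R k) = 4 * M l k].
Proof.
split=> [|i|i|l k];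
  [| case: (ord3P i) => -> | case: (ord3P i) => -> | case: (ord3P l) => ->; case: (ord3P k) => ->];
  by rewrite pauli_coordE !sum2 !pauli_expansionE ?pauliE ?mxE /=; ring.
Qed.

Lemma pauli_expansion_inj s u v M s' u' v' M' :
  pauli_expansion s u v M = pauli_expansion s' u' v' M' -> [/\ s = s', u = u', v = v' & M = M'].
Proof.
move=> eqE; have [s1 u1 v1 M1] := pauli_coord_expansion s u v M.
have [s2 u2 v2 M2] := pauli_coord_expansion s' u' v' M'; rewrite -eqE in s2 u2 v2 M2.
have mul4I : injective ( *%R 4 : R -> R) by apply: mulfI; rewrite pnatr_eq0.
split; first by apply: mul4I; rewrite -s1 -s2.
- by apply/matrixP => i j; rewrite ord1; apply: mul4I; rewrite -u1 -u2.
- by apply/matrixP => i j; rewrite ord1; apply: mul4I; rewrite -v1 -v2.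
- by apply/matrixP => l k; apply: mul4I; rewrite -M1 -M2.
Qed.

Lemma pauli_expansion_scale (c s : R) u v M :
  c%:C *: pauli_expansion s u v M = pauli_expansion (c * s) (c *: u) (c *: v) (c *: M).
Proof.
apply/matrixP => r c'; case: (mxtens_indexP r) => a k; case: (mxtens_indexP c') => a' k'.
rewrite mxE !pauli_expansionE.
by case: (ord2P a) => ->; case: (ord2P k) => ->; case: (ord2P a') => ->; case: (ord2P k') => ->;
  apply complex_eq_ReIm; rewrite /= !mxE; split; ring.
Qed.

Lemma Pform_expansion (b g : 'cV[R]_3) (d : 'M[R]_3) :
  Pform b g d = (4^-1 : R)%:C *: pauli_expansion 1 b g d.
Proof. by rewrite /Pform /pauli_expansion rmorph1 scale1r invn_complex. Qed.

Lemma PformE (b g : 'cV[R]_3) (d : 'M[R]_3) (a k a' k' : 'I_2) :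
  Pform b g d (mt a k) (mt a' k') = (4^-1 : R)%:C * expansion_entry 1 b g d a k a' k'.
Proof. by rewrite Pform_expansion mxE pauli_expansionE. Qed.

Lemma Pform_sqr (b g : 'cV[R]_3) (d : 'M[R]_3) :
  Pform b g d *m Pform b g d = (4^-1 : R)%:C *: pauli_expansion
    (4^-1 * (1 + vnorm b ^+ 2 + vnorm g ^+ 2 + \tr (d *m d^T)))
    (2^-1 *: (b + d *m g)) (2^-1 *: (g + d^T *m b)) (2^-1 *: (d + b *m g^T - (\adj d)^T)).
Proof.
have half : (4^-1 * 2 : R) = 2^-1 by field.
rewrite Pform_expansion -scalemxAl -scalemxAr pauli_expansion_sqr.
by rewrite [in LHS]pauli_expansion_scale !scalerA half.
Qed.

Lemma Pform_idem_pure_eqs (b g : 'cV[R]_3) (d : 'M[R]_3) :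
  Pform b g d *m Pform b g d = Pform b g d <-> pure_eqs b g d.
Proof.
have c_nz : (4^-1 : R)%:C != 0 by rewrite eq_complex /= negb_and invr_eq0 pnatr_eq0.
rewrite Pform_sqr [in RHS]Pform_expansion -!addrA.
split=> [/(scalerI c_nz)/pauli_expansion_inj [norms dg gE cof] |].
  split; [lra | exact/scale_half_addr_eq | exact/scale_half_addr_eq |].
  by move/scale_half_addr_eq/eqP: cof; rewrite subr_eq => /eqP ->.
case=> norms dg gE cof; rewrite (_ : 4^-1 * _ = 1); last by lra.
rewrite (scale_half_addr_eq _ _).2 // (scale_half_addr_eq _ _).2 //.
by rewrite (scale_half_addr_eq _ _).2 // -cof addrK.
Qed.

Lemma Pform_inj (b g g' : 'cV[R]_3) (d d' : 'M[R]_3) :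
  Pform b g d = Pform b g' d' -> g = g' /\ d = d'.
Proof.
have c_nz : (4^-1 : R)%:C != 0 by rewrite eq_complex /= negb_and invr_eq0 pnatr_eq0.
by rewrite !Pform_expansion => /(scalerI c_nz)/pauli_expansion_inj[].
Qed.

Lemma adjmxE m n (A : 'M[C]_(m, n)) i j : adjmx A i j = (A j i)^*.
Proof. by rewrite !mxE. Qed.

Lemma ptrace2E (P : 'M[C]_(2 * 2)) a a' : ptrace2 P a a' = \sum_(k < 2) P (mt a k) (mt a' k).
Proof. by rewrite mxE. Qed.

Lemma adjmx_Pform (b g : 'cV[R]_3) (d : 'M[R]_3) : adjmx (Pform b g d) = Pform b g d.
Proof.
apply/matrixP => r c; case: (mxtens_indexP r) => a k; case: (mxtens_indexP c) => a' k'.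
rewrite adjmxE !PformE.
by case: (ord2P a) => ->; case: (ord2P k) => ->; case: (ord2P a') => ->; case: (ord2P k') => ->;
  apply complex_eq_ReIm; rewrite /=; split; ring.
Qed.

Lemma mxtrace_Pform (b g : 'cV[R]_3) (d : 'M[R]_3) : \tr (Pform b g d) = 1.
Proof.
rewrite /mxtrace sum4 !sum2 !PformE; apply complex_eq_ReIm; rewrite /=; split; lra.
Qed.

Lemma ptrace2_Pform (b g : 'cV[R]_3) (d : 'M[R]_3) : ptrace2 (Pform b g d) = rho_of b.
Proof.
apply/matrixP => a a'; rewrite ptrace2E sum2 !PformE /rho_of !mxE summxE sum3 !mxE invn_complex.
by case: (ord2P a) => ->; case: (ord2P a') => ->; rewrite ?mulr1n ?mulr0n; apply complex_eq_ReIm; rewrite /=; split; lra.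
Qed.

Lemma adjmxM m n p (A : 'M[C]_(m, n)) (B : 'M[C]_(n, p)) :
  adjmx (A *m B) = adjmx B *m adjmx A.
Proof. by rewrite /adjmx map_mxM trmx_mul. Qed.

Lemma psd_herm_idem n (A : 'M[C]_n) : A = adjmx A -> A *m A = A -> psd A.
Proof.
move=> herm idem; split=> // v.
have -> : adjmx v *m A *m v = adjmx (A *m v) *m (A *m v).
  by rewrite adjmxM -herm -{1}idem !mulmxA.
by rewrite mxE sumr_ge0 // => i _; rewrite adjmxE mulrC mulcJ_ge0.
Qed.

Lemma purification_Pform_idem (b g : 'cV[R]_3) (d : 'M[R]_3) :
  purification (rho_of b) (Pform b g d) <-> Pform b g d *m Pform b g d = Pform b g d.
Proof.
split=> [[[_ [_ idem]] _] // | idem].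
split; last exact: ptrace2_Pform.
by split; [apply: psd_herm_idem; rewrite ?adjmx_Pform | split; rewrite ?mxtrace_Pform].
Qed.

Definition pauli_gamma P : 'cV[R]_3 := \col_i pauli_coord P 1%:M (pauli R i).
Definition pauli_delta P : 'M[R]_3 := \matrix_(l, k) pauli_coord P (pauli R l) (pauli R k).

Lemma mx_ReIm m n (A : 'M[C]_(m, n)) : A = \matrix_(i, j) Complex (Re (A i j)) (Im (A i j)).
Proof. by apply/matrixP => i j; rewrite mxE; case: (A i j). Qed.

Lemma purification_Pform (b : 'cV[R]_3) P :
  purification (rho_of b) P -> P = Pform b (pauli_gamma P) (pauli_delta P).
Proof.
case=> -[[herm _] [tr1 _]] pt.
have [re [im PE]] : exists re im, P = \matrix_(r, c) Complex (re r c) (im r c).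
  by do 2!eexists; exact: mx_ReIm.
rewrite {}PE in herm tr1 pt *.
have hermE r c : re r c = re c r /\ im r c = - im c r.
  by move/matrixP/(_ r c): herm; rewrite adjmxE !mxE => -[-> ->].
move: tr1; rewrite /mxtrace sum4 !sum2 !mxE => /complex_eq_ReIm /= [tr_re tr_im].
have ptE (a a' : 'I_2) := proj1 (complex_eq_ReIm _ _) (congr1 (fun A : 'M[C]_2 => A a a') pt).
move: (ptE ord0 ord0) (ptE ord0 ord_max) (ptE ord_max ord0) (ptE ord_max ord_max).
rewrite !ptrace2E !sum2 /rho_of !mxE !summxE !sum3 !mxE invn_complex /= => {pt ptE herm}.
move=> [pt1 pt2] [pt3 pt4] [pt5 pt6] [pt7 pt8].
(* Hermiticity expresses the lower triangle through the upper one, and the partial trace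
   then determines [re B B], [re D D] and the [(B, D)] entry. *)
pose A := mt ord0 ord0; pose B := mt ord0 ord_max; pose C := mt ord_max ord0; pose D := mt ord_max ord_max.
have diag r : im r r = 0 by have [_] := hermE r r; lra.
have [reBA imBA] := hermE B A; have [reCA imCA] := hermE C A; have [reDA imDA] := hermE D A.
have [reCB imCB] := hermE C B; have [reDB imDB] := hermE D B; have [reDC imDC] := hermE D C.
rewrite !diag in tr_im pt2 pt8.
set Q := \matrix_(r, c) _.
have gE i : pauli_gamma Q i 0 = pauli_coord Q 1%:M (pauli R i) by rewrite mxE.
have dE l k : pauli_delta Q l k = pauli_coord Q (pauli R l) (pauli R k) by rewrite mxE.
move: (pauli_gamma Q) (pauli_delta Q) gE dE => G Dm gE dE.
move: (gE j0) (gE j1) (gE j2) (dE j0 j0) (dE j0 j1) (dE j0 j2) (dE j1 j0) (dE j1 j1) (dE j1 j2)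
  (dE j2 j0) (dE j2 j1) (dE j2 j2) => {gE dE}.
rewrite !pauli_coordE !sum2 /Q !mxE /= -/A -/B -/C -/D.
rewrite ?diag ?reBA ?imBA ?reCA ?imCA ?reDA ?imDA ?reCB ?imCB ?reDB ?imDB ?reDC ?imDC.
move=> g0 g1 g2 d00 d01 d02 d10 d11 d12 d20 d21 d22.
apply/matrixP => r c; case: (mxtens_indexP r) => a k; case: (mxtens_indexP c) => a' k'.
rewrite PformE mxE.
have eBB : re B B = 2^-1 * (1 + b j2 0) - re A A by lra.
have eDD : re D D = 2^-1 * (1 - b j2 0) - re C C by lra.
have eBD : re B D = 2^-1 * b j0 0 - re A C by lra.
have eimBD : im B D = - (2^-1 * b j1 0) - im A C by lra.
by case: (ord2P a) => ->; case: (ord2P k) => ->; case: (ord2P a') => ->; case: (ord2P k') => ->;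
  rewrite /= ?g0 ?g1 ?g2 ?d00 ?d01 ?d02 ?d10 ?d11 ?d12 ?d20 ?d21 ?d22 -/A -/B -/C -/D;
  rewrite ?diag ?reBA ?imBA ?reCA ?imCA ?reDA ?imDA ?reCB ?imCB ?reDB ?imDB ?reDC ?imDC;
  rewrite ?eBB ?eDD ?eBD ?eimBD; apply complex_eq_ReIm; rewrite /=; split; field.
Qed.

End Pauli.

Section Purifications.
Variables (R : rcfType) (b : 'cV[R]_3).

Lemma purification_PformP g d :
  purification (rho_of b) (Pform b g d) <-> g = d^T *m b /\ delta_system b d.
Proof.
rewrite purification_Pform_idem Pform_idem_pure_eqs.
by split=> [/pure_eqs_delta_system // | [-> /delta_system_pure_eqs]].
Qed.

Lemma purification_delta_system P : purification (rho_of b) P ->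
  delta_system b (pauli_delta P) /\ P = Pform b ((pauli_delta P)^T *m b) (pauli_delta P).
Proof.
move=> purP; have PE := purification_Pform purP.
by move: purP; rewrite {1}PE => /purification_PformP[gE sys]; split=> //; rewrite {1}PE gE.
Qed.

Lemma purification_bij_SO3 : vnorm b < 1 -> forall d0, delta_system b d0 ->
  set_bij (@is_SO3 R) (purification (rho_of b)) (fun S => Pform b ((d0 *m S)^T *m b) (d0 *m S)).
Proof.
move=> b_lt1 d0 sys0.
have d0_unit : d0 \in unitmx by rewrite unitmxE unitfE (delta_system_det_neq0 _ sys0) ?lt_eqF.
split; [move=> S SO3S | split; [move=> S S' _ _ /Pform_inj[_] | move=> P]].
- by apply/purification_PformP; split; last exact: delta_system_mulmx_SO3.
- exact: (can_inj (mulKmx d0_unit)).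
move=> /purification_delta_system[sys PE].
have [S [SO3S dE]] := delta_system_orbit (ltW b_lt1) sys0 sys.
by exists S; split; rewrite // [RHS]PE dE.
Qed.

Lemma purification_bij_sphere : vnorm b = 1 ->
  set_bij (fun v => vnorm v = 1) (purification (rho_of b)) (fun v => Pform b v (b *m v^T)).
Proof.
move=> b1; split; [move=> v v1 | split; [by move=> v v' _ _ /Pform_inj[] | move=> P]].
  apply/purification_PformP; split; last exact: delta_system_rank1.
  by rewrite trmx_mul trmxK -mulmxA trmx_mul_vnorm b1 expr1n mulmx1.
move=> /purification_delta_system[sys PE]; have [dE g1] := delta_system_unit_norm b1 sys.
by exists ((pauli_delta P)^T *m b); split; rewrite // [RHS]PE -dE.
Qed.

End Purifications.

Theorem theorem2p1 (R : rcfType) (b : 'cV[R]_3) (hb : vnorm b <= 1) :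
  (* (i) *)
  (forall (g : 'cV[R]_3) (d : 'M[R]_3),
     purification (rho_of b) (Pform b g d) <-> (g = d^T *m b /\ delta_system b d))
  /\ (forall P : 'M[R[i]]_(2 * 2), purification (rho_of b) P ->
        exists (g : 'cV[R]_3) (d : 'M[R]_3), P = Pform b g d)
  (* (ii) *)
  /\ (exists d : 'M[R]_3, delta_system b d)
  /\ (forall d0 : 'M[R]_3, delta_system b d0 ->
        forall d : 'M[R]_3, delta_system b d <-> exists S, is_SO3 S /\ d = d0 *m S)
  (* (iii) *)
  /\ (vnorm b < 1 -> forall d0 : 'M[R]_3, delta_system b d0 ->
        set_bij (@is_SO3 R) (purification (rho_of b))
          (fun S => Pform b ((d0 *m S)^T *m b) (d0 *m S)))
  /\ (vnorm b = 1 ->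
        exists f : 'cV[R]_3 -> 'M[R[i]]_(2 * 2),
          set_bij (fun v => vnorm v = 1) (purification (rho_of b)) f).
Proof.
split; first exact: purification_PformP.
split; first by move=> P /purification_Pform PE; exists (pauli_gamma P), (pauli_delta P).
split; first exact: delta_system_exists.
split.
  move=> d0 sys0 d; split=> [sys | [S [SO3S ->]]]; last exact: delta_system_mulmx_SO3.
  exact: delta_system_orbit hb sys0 sys.
split; first exact: purification_bij_SO3.
by move=> b1; eexists; exact: purification_bij_sphere.
Qed.
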